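(* Let $\delta\in[0,1]$, let $(U,\mathcal{P})$ be an instance of MESC with $\mathcal{P}=\{P_1,\dots,P_k\}$, let $BG$ be any cover output by BiasedGreedy($\delta$), with Light set $L$ and Heavy set $H=U\setminus L$, and let $OPT$ be any cover. For $v\in U$ write $a_v=|P_{BG(v)}|$, and for $i\in[k]$ let $x_i=|OPT^{-1}(i)|$ and $y_i=|OPT^{-1}(i)\cap H|$. Then: (1) for every $i\in[k]$ and every $v\in OPT^{-1}(i)\cap L$, $a_v\ge x_i$; (2) for every $i\in[k]$, $\prod_{v\in OPT^{-1}(i)\cap H} a_v\ \ge\ y_i!$. Consequently, \[ -\frac1n\sum_{v\in U}\log_2 a_v\ \le\ Ent(OPT)-\log_2 n-\frac1n\sum_{i=1}^{k}y_i\log_2\frac{y_i}{x_i}+\frac{n-\lceil\delta n\rceil}{n}\log_2 e . \]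
   Context: Minimum Entropy Set Cover (MESC): an instance is a finite ground set $U$ with $|U|=n\ge1$ and a family $\mathcal{P}=\{P_1,\dots,P_k\}$ of subsets of $U$ with $\bigcup_i P_i=U$. A cover is a function $g:U\to[k]$ with $u\in P_{g(u)}$ for all $u\in U$. Its entropy is $Ent(g)=-\sum_{i=1}^{k}\frac{|g^{-1}(i)|}{n}\log_2\frac{|g^{-1}(i)|}{n}$ (with $0\log_2 0=0$; terms with $y_i=0$ in $\sum y_i\log_2(y_i/x_i)$ are taken as $0$). The frequency of an element $u$ is the number of indices $i$ with $u\in P_i$. Algorithm BiasedGreedy($\delta$), $\delta\in[0,1]$: let $L\subseteq U$ be a set of $\lceil\delta n\rceil$ elements of smallest frequency (ties broken arbitrarily) (''Light'' elements) and $H=U\setminus L$ (''Heavy'' elements). Phase 1: for every $e\in L$, set $g(e)=i_e$ where $i_e$ maximizes $|P_{i}|$ over all $i$ with $e\in P_i$. Phase 2: initialize $Q_i=P_i\setminus L$ for all $i\in[k]$; while $H\neq\emptyset$: pick any $e\in H$, set $g(e)=i_e$ where $i_e$ maximizes the current $|Q_i|$ over all $i$ with $e\in Q_i$, then delete $e$ from every $Q_i$ and from $H$. The output is the cover $g$. *)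

From Stdlib Require Import Reals.
From mathcomp Require Import all_boot.

Set Implicit Arguments.
Unset Strict Implicit.
Unset Printing Implicit Defensive.

Definition log2 (x : R) : R := Rdiv (ln x) (ln 2).

(* ceiling of a real, via Int_part (= floor): ceil x = - floor (- x) *)
Definition nceil (x : R) : nat := Z.to_nat (- Int_part (Ropp x))%Z.

Section MESC.
Variables (U : finType) (k : nat) (P : 'I_k -> {set U}).

Definition freq (u : U) : nat := #|[set i : 'I_k | u \in P i]|.

Definition is_cover (g : U -> 'I_k) : Prop := forall u, u \in P (g u).

Definition preim_card (g : U -> 'I_k) (i : 'I_k) : nat := #|[set u | g u == i]|.

Local Open Scope R_scope.

Definition negplogp (c n : nat) : R :=
  if (c == 0)%N then 0 else - (INR c / INR n) * log2 (INR c / INR n).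

Definition Ent (g : U -> 'I_k) : R :=
  \big[Rplus/0]_(i < k) negplogp (preim_card g i) #|U|.

Definition ylogyx (y x : nat) : R :=
  if (y == 0)%N then 0 else INR y * log2 (INR y / INR x).

Local Close Scope R_scope.

Definition is_BiasedGreedy_output (delta : R) (L : {set U}) (g : U -> 'I_k) : Prop :=
  (* L: ceil(delta n) elements of smallest frequency (ties arbitrary) *)
  #|L| = nceil (Rmult delta (INR #|U|)) /\
  (forall u v, u \in L -> v \notin L -> freq u <= freq v) /\
  (* Phase 1: each light e goes to a set of maximum size containing it *)
  (forall e, e \in L ->
     e \in P (g e) /\ (forall i, e \in P i -> #|P i| <= #|P (g e)|)) /\
  (* Phase 2: heavy elements processed in an arbitrary order s; when e is
     processed, Q_i = P_i \ L \ (already processed), and g e maximizes |Q_i|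
     among the i with e \in Q_i *)
  (exists s : seq U,
     uniq s /\ (forall x, (x \in s) = (x \notin L)) /\
     forall (s1 : seq U) (e : U) (s2 : seq U), s = s1 ++ e :: s2 ->
       let Q := fun i : 'I_k => P i :\: L :\: [set x in s1] in
       e \in Q (g e) /\ (forall i, e \in Q i -> #|Q i| <= #|Q (g e)|)).

End MESC.

(* Fix a class i of the reference cover OPT, with x_i elements of which y_i
   are Heavy, and write a_v = |P_{BG v}|.
   - A Light v in class i was assigned a largest set containing it, and the
     whole class lies in P_i, so a_v >= x_i.
   - Walking through the Heavy elements in the order in which Phase 2
     processed them, when the j-th last Heavy element e of class i is
     assigned, the set Q_i still contains the j remaining Heavy elements of
     class i; since Q_{BG e} is the largest Q containing e and lies in
     P_{BG e}, a_e >= j.  Hence the product over the Heavy part is >= y_i!.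
   Taking logarithms and using ln (y!) >= y ln y - y gives, per class,
     x_i ln x_i - y_i ln x_i + y_i ln y_i - y_i <= sum_{OPT v = i} ln a_v.
   Rewriting Ent(OPT) and the y log (y/x) terms with natural logarithms,
   this per-class inequality is exactly the nonnegativity of the i-th term of
   a sum whose total is the difference of the two sides of the final
   estimate; summing over i, with sum_i x_i = n and sum_i y_i = n - |L|,
   yields the theorem. *)

From HB Require Import structures.
From Stdlib Require Import Reals Lra.
From mathcomp Require Import all_boot.

Set Implicit Arguments.
Unset Strict Implicit.
Unset Printing Implicit Defensive.

(* Real addition as a commutative monoid, so that bigop lemmas apply to
   the sums [\big[Rplus/0]] of the statement. *)
HB.instance Definition _ := Monoid.isComLaw.Build R (IZR 0) Rplus
  (fun a b c => esym (Rplus_assoc a b c)) Rplus_comm Rplus_0_l.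

Local Open Scope R_scope.

Section RealSums.
Variables (I : Type) (r : seq I) (p : pred I).

Lemma sumR_scaler (c : R) (F : I -> R) :
  \big[Rplus/0]_(i <- r | p i) (F i * c) = (\big[Rplus/0]_(i <- r | p i) F i) * c.
Proof.
apply: (big_rec2 (fun a b => a = b * c)); first ring.
by move=> i a b _ ->; ring.
Qed.

Lemma sumR_opp (F : I -> R) :
  \big[Rplus/0]_(i <- r | p i) (- F i) = - \big[Rplus/0]_(i <- r | p i) F i.
Proof.
apply: (big_rec2 (fun a b => a = - b)); first ring.
by move=> i a b _ ->; ring.
Qed.

Lemma sumR_le (F G : I -> R) :
  (forall i, p i -> F i <= G i) ->
  \big[Rplus/0]_(i <- r | p i) F i <= \big[Rplus/0]_(i <- r | p i) G i.
Proof.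
move=> leFG; apply: (big_ind2 (fun a b => a <= b)) => //; first lra.
by move=> *; lra.
Qed.

Lemma sumR_ge0 (F : I -> R) :
  (forall i, p i -> 0 <= F i) -> 0 <= \big[Rplus/0]_(i <- r | p i) F i.
Proof.
move=> F_ge0; apply: (big_ind (fun a => 0 <= a)) => //; first lra.
by move=> *; lra.
Qed.

Lemma sumR_INR (F : I -> nat) :
  \big[Rplus/0]_(i <- r | p i) INR (F i) = INR (\sum_(i <- r | p i) F i)%N.
Proof.
apply: (big_rec2 (fun a b => a = INR b)) => // i a b _ ->.
by rewrite plus_INR.
Qed.

Lemma sumR_class_terms (X Y : I -> nat) (F G H : I -> R) (b c d e : R) :
  \big[Rplus/0]_(i <- r | p i) (F i - INR (X i) * b - G i / c + INR (Y i) * d + H i / e)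
  = \big[Rplus/0]_(i <- r | p i) F i - INR (\sum_(i <- r | p i) X i)%N * b
    - (\big[Rplus/0]_(i <- r | p i) G i) / c
    + INR (\sum_(i <- r | p i) Y i)%N * d + (\big[Rplus/0]_(i <- r | p i) H i) / e.
Proof.
by rewrite /Rminus /Rdiv !big_split /= !sumR_opp !sumR_scaler !sumR_INR.
Qed.

Lemma sumR_const (c : R) :
  \big[Rplus/0]_(i <- r | p i) c = INR (\sum_(i <- r | p i) 1)%N * c.
Proof.
rewrite -sumR_INR -sumR_scaler; apply: eq_bigr => i _ /=; ring.
Qed.

Lemma ln_prod (F : I -> nat) :
  (forall i, p i -> (0 < F i)%N) ->
  ln (INR (\prod_(i <- r | p i) F i)%N) = \big[Rplus/0]_(i <- r | p i) ln (INR (F i)).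
Proof.
move=> F_gt0.
suff [_ ->] : 0 < INR (\prod_(i <- r | p i) F i)%N /\
    \big[Rplus/0]_(i <- r | p i) ln (INR (F i)) = ln (INR (\prod_(i <- r | p i) F i)%N)
  by [].
apply: (big_rec2 (fun a b => 0 < INR b /\ a = ln (INR b))).
  by split; [simpl; lra | rewrite ln_1].
move=> i a b pi [b_gt0 ->].
have Fi_gt0 : 0 < INR (F i) by apply/lt_0_INR/ltP/F_gt0.
by rewrite mult_INR ln_mult //; split; first exact: Rmult_lt_0_compat.
Qed.

End RealSums.

Lemma ln_le (x y : R) : 0 < x -> x <= y -> ln x <= ln y.
Proof. by move=> x_gt0 [lt_xy | ->]; [left; exact: ln_increasing | lra]. Qed.

Lemma ln2_gt0 : 0 < ln 2.
Proof. by have := ln_lt_2; lra. Qed.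

Lemma INR_gt0 (c : nat) : (0 < c)%N -> 0 < INR c.
Proof. by move=> /ltP; exact: lt_0_INR. Qed.

Lemma ln_1px_le (t : R) : 0 <= t -> ln (1 + t) <= t.
Proof.
move=> [t_gt0 | <-]; last by rewrite Rplus_0_r ln_1; lra.
have exp_gt := exp_ineq1 t (Rgt_not_eq _ _ t_gt0).
by rewrite -{2}(ln_exp t); apply: ln_le; lra.
Qed.

Lemma ln_succ_increment (y : nat) :
  INR y * ln (INR y.+1) - INR y * ln (INR y) <= 1.
Proof.
case: y => [|y]; first by rewrite /=; lra.
have y_gt0 : 0 < INR y.+1 by exact: INR_gt0.
have inv_gt0 := Rinv_0_lt_compat _ y_gt0.
have -> : INR y.+2 = INR y.+1 * (1 + / INR y.+1) by rewrite (S_INR y.+1); field; lra.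
rewrite ln_mult; [|lra|lra].
have bound := ln_1px_le (Rlt_le _ _ inv_gt0).
have : INR y.+1 * ln (1 + / INR y.+1) <= INR y.+1 * / INR y.+1
  by apply: Rmult_le_compat_l; lra.
by rewrite Rinv_r; lra.
Qed.

Lemma ln_fact_lb (y : nat) : INR y * ln (INR y) - INR y <= ln (INR y`!).
Proof.
elim: y => [|y IH]; first by rewrite /= ln_1; lra.
rewrite factS mult_INR ln_mult; [|exact/INR_gt0|exact/INR_gt0/fact_gt0].
by have := ln_succ_increment y; rewrite S_INR; lra.
Qed.

Lemma negplogp_ln (c n : nat) : (0 < n)%N ->
  negplogp c n = (INR c * ln (INR n) - INR c * ln (INR c)) / (INR n * ln 2).
Proof.
move=> n_gt0; have n_pos := INR_gt0 n_gt0; have ln2_pos := ln2_gt0.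
rewrite /negplogp; case: eqP => [-> | /eqP c_neq0]; first by rewrite /=; field; lra.
have c_pos : 0 < INR c by apply: INR_gt0; rewrite lt0n.
rewrite /log2 /Rdiv ln_mult ?ln_Rinv //; last exact: Rinv_0_lt_compat.
by field; lra.
Qed.

Lemma ylogyx_ln (y x : nat) : (y <= x)%N ->
  ylogyx y x = (INR y * ln (INR y) - INR y * ln (INR x)) / ln 2.
Proof.
move=> le_yx; have ln2_pos := ln2_gt0.
rewrite /ylogyx; case: eqP => [-> | /eqP y_neq0]; first by rewrite /=; field; lra.
have y_pos : 0 < INR y by apply: INR_gt0; rewrite lt0n.
have x_pos : 0 < INR x by apply: INR_gt0; apply: leq_trans le_yx; rewrite lt0n.
rewrite /log2 /Rdiv ln_mult ?ln_Rinv //; last exact: Rinv_0_lt_compat.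
by field; lra.
Qed.

(* The per-class inequality, stated with natural logarithms, is equivalent
   to the nonnegativity of the class's contribution to the final estimate;
   [lnA] stands for the sum of ln a_v over the class. *)
Lemma class_term_nonneg (n x y : nat) (lnA : R) :
  (0 < n)%N -> (y <= x)%N ->
  INR x * ln (INR x) - INR y * ln (INR x) + INR y * ln (INR y) - INR y <= lnA ->
  0 <= negplogp x n - INR x * (log2 (INR n) / INR n) - ylogyx y x / INR n
       + INR y * (log2 (exp 1) / INR n) + lnA / (INR n * ln 2).
Proof.
move=> n_gt0 le_yx bound.
have n_pos := INR_gt0 n_gt0; have ln2_pos := ln2_gt0.
rewrite negplogp_ln // ylogyx_ln // /log2 ln_exp.
set d := lnA - (INR x * ln (INR x) - INR y * ln (INR x) + INR y * ln (INR y) - INR y).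
have d_scaled_ge0 : 0 <= d / (INR n * ln 2).
  rewrite /Rdiv; apply: Rmult_le_pos; first by rewrite /d; lra.
  by left; apply/Rinv_0_lt_compat/Rmult_lt_0_compat.
apply: Rle_trans d_scaled_ge0 (Req_le _ _ _).
by rewrite /d; field; lra.
Qed.

(* The final estimate, rearranged: it says exactly that the total of the
   per-class contributions (in the shape of [class_term_nonneg]) is
   nonnegative, once sum_i x_i = n and sum_i y_i = n - c. *)
Lemma estimate_of_total (n c E log2n log2e SG SA l2 : R) :
  0 < n -> 0 < l2 ->
  0 <= E - n * (log2n / n) - SG / n + (n - c) * (log2e / n) + SA / (n * l2) ->
  - (1 / n) * (SA / l2) <= E - log2n - 1 / n * SG + (n - c) / n * log2e.
Proof.
move=> n_pos l2_pos total_ge0.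
have rearrange : E - log2n - 1 / n * SG + (n - c) / n * log2e - - (1 / n) * (SA / l2)
  = E - n * (log2n / n) - SG / n + (n - c) * (log2e / n) + SA / (n * l2)
  by field; lra.
lra.
Qed.

Local Close Scope R_scope.

Lemma big_outside_seq (T : finType) (R : Type) (idx : R) (op : Monoid.com_law idx)
    (s : seq T) (A : {set T}) (q : pred T) (F : T -> R) :
  uniq s -> (forall v, (v \in s) = (v \notin A)) ->
  \big[op/idx]_(v | q v && (v \notin A)) F v = \big[op/idx]_(v <- s | q v) F v.
Proof.
move=> s_uniq s_mem.
rewrite [RHS]big_mkcond (big_uniq _ s_uniq) [RHS]big_mkcond [LHS]big_mkcond.
by apply: eq_bigr => v _; rewrite s_mem; case: (q v); case: (v \in A).
Qed.

Section BiasedGreedy.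
Variables (U : finType) (k : nat) (P : 'I_k -> {set U}) (L : {set U}).
Variables (BG OPT : U -> 'I_k).
Hypothesis OPT_cover : is_cover P OPT.

Local Notation class_size i := #|[set v | OPT v == i]|.
Local Notation heavy_size i := #|[set v | (OPT v == i) && (v \notin L)]|.

Hypothesis phase1 : forall e, e \in L ->
  e \in P (BG e) /\ (forall i, e \in P i -> #|P i| <= #|P (BG e)|).

Variable s : seq U.
Hypothesis s_uniq : uniq s.
Hypothesis s_heavy : forall v, (v \in s) = (v \notin L).
Hypothesis phase2 : forall (s1 : seq U) (e : U) (s2 : seq U), s = s1 ++ e :: s2 ->
  let Q := fun i : 'I_k => P i :\: L :\: [set x in s1] in
  e \in Q (BG e) /\ (forall i, e \in Q i -> #|Q i| <= #|Q (BG e)|).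

(* Part (1): a Light element of class i lies in a set of size at least x_i,
   because P_i itself contains the whole class. *)
Lemma light_bound (i : 'I_k) (v : U) :
  OPT v = i -> v \in L -> class_size i <= #|P (BG v)|.
Proof.
move=> OPTv vL; have [_ BG_max] := phase1 vL.
apply: leq_trans (BG_max i _); last by rewrite -OPTv.
by apply/subset_leq_card/subsetP => u; rewrite inE => /eqP <-.
Qed.

Lemma remaining_in_Q (s1 s2 : seq U) (e v : U) (i : 'I_k) :
  s = s1 ++ e :: s2 -> v \in e :: s2 -> OPT v = i ->
  v \in P i :\: L :\: [set x in s1].
Proof.
move=> def_s v_rest OPTv.
have := s_uniq; rewrite def_s cat_uniq => /and3P [_ disj _].
rewrite !inE -OPTv OPT_cover andbT -s_heavy def_s mem_cat v_rest orbT andbT.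
exact: (hasPn disj).
Qed.

Lemma greedy_step (s1 s2 : seq U) (e : U) :
  s = s1 ++ e :: s2 -> count (fun v => OPT v == OPT e) (e :: s2) <= #|P (BG e)|.
Proof.
move=> def_s; have [_ Q_max] := phase2 def_s.
set Q := fun i : 'I_k => P i :\: L :\: [set x in s1] in Q_max.
have Q_le_P : #|Q (BG e)| <= #|P (BG e)|.
  exact: leq_trans (subset_leq_card (subsetDl _ _)) (subset_leq_card (subsetDl _ _)).
apply: leq_trans (leq_trans (Q_max _ (remaining_in_Q def_s _ _)) Q_le_P);
  rewrite ?mem_head //.
rewrite -size_filter cardE; apply: uniq_leq_size.
  by apply: filter_uniq; move: s_uniq; rewrite def_s cat_uniq => /and3P [_ _].
move=> v; rewrite mem_filter mem_enum => /andP [/eqP OPTv v_rest].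
exact: remaining_in_Q def_s v_rest OPTv.
Qed.

Lemma greedy_suffix_prod (i : 'I_k) (s1 s2 : seq U) : s = s1 ++ s2 ->
  (count (fun v => OPT v == i) s2)`! <= \prod_(v <- s2 | OPT v == i) #|P (BG v)|.
Proof.
elim: s2 s1 => [|e s2 IH] s1 def_s; first by rewrite big_nil.
rewrite big_cons /=.
have IH_e := IH (rcons s1 e) ltac:(by rewrite cat_rcons def_s).
case: eqP => [OPTe | _]; last by rewrite add0n.
rewrite add1n factS; apply: leq_mul IH_e.
by have := greedy_step def_s; rewrite /= OPTe eqxx.
Qed.

Lemma heavy_factorial_bound (i : 'I_k) :
  (heavy_size i)`! <= \prod_(v | (OPT v == i) && (v \notin L)) #|P (BG v)|.
Proof.
rewrite (big_outside_seq _ _ _ s_uniq s_heavy) -sum1_card.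
rewrite (eq_bigl (fun v => (OPT v == i) && (v \notin L))); last by move=> v; rewrite inE.
rewrite (big_outside_seq _ _ _ s_uniq s_heavy) sum1_count.
exact: greedy_suffix_prod (erefl : s = [::] ++ s).
Qed.

Lemma BG_size_gt0 (v : U) : 0 < #|P (BG v)|.
Proof.
rewrite card_gt0; apply/set0Pn; exists v.
have [vL | vH] := boolP (v \in L); first by case: (phase1 vL).
rewrite -s_heavy in vH; case/splitPr def_s: {1}s / vH => [s1 s2].
by have [] := phase2 def_s; rewrite !inE => /and3P [].
Qed.

Lemma class_partition (q : pred U) :
  \sum_(i < k) #|[set v | (OPT v == i) && q v]| = #|q|.
Proof.
transitivity (\sum_(i < k) \sum_(v | q v && (OPT v == i)) 1).
  by apply: eq_bigr => i _; rewrite -sum1_card; apply: eq_bigl => v; rewrite inE andbC.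
by rewrite -(partition_big OPT predT) // sum1_card.
Qed.

Lemma class_sizes_total : \sum_(i < k) class_size i = #|U|.
Proof.
rewrite -(class_partition predT).
by apply: eq_bigr => i _; apply: eq_card => v; rewrite !inE andbT.
Qed.

Lemma heavy_sizes_total : #|L| + \sum_(i < k) heavy_size i = #|U|.
Proof.
rewrite -(cardC L) -(class_partition [predC L]).
by congr (_ + _); apply: eq_bigr => i _; apply: eq_card => v; rewrite !inE.
Qed.

Lemma class_card_split (i : 'I_k) :
  #|[set v | (OPT v == i) && (v \in L)]| + heavy_size i = class_size i.
Proof.
rewrite -(cardsID L [set v | OPT v == i]).
by congr (_ + _); apply: eq_card => v; rewrite !inE andbC.
Qed.

Local Open Scope R_scope.

Lemma class_log_bound (i : 'I_k) :
  let x := INR (class_size i) in let y := INR (heavy_size i) in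
  x * ln x - y * ln x + y * ln y - y <=
  \big[Rplus/0]_(v | OPT v == i) ln (INR #|P (BG v)|).
Proof.
move=> x y; rewrite (bigID (fun v => v \in L)) /=.
have light_card : x - y = INR #|[set v | (OPT v == i) && (v \in L)]|.
  by rewrite /x /y -class_card_split plus_INR; ring.
have light_part : (x - y) * ln x <=
    \big[Rplus/0]_(v | (OPT v == i) && (v \in L)) ln (INR #|P (BG v)|).
  rewrite light_card -sum1_card.
  rewrite (eq_bigl (fun v => (OPT v == i) && (v \in L))); last by move=> v; rewrite inE.
  rewrite -sumR_const; apply: sumR_le => v /andP [/eqP OPTv vL].
  apply: ln_le; last exact/le_INR/leP/light_bound.
  by apply/INR_gt0; rewrite card_gt0; apply/set0Pn; exists v; rewrite inE OPTv.
have heavy_part : y * ln y - y <=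
    \big[Rplus/0]_(v | (OPT v == i) && (v \notin L)) ln (INR #|P (BG v)|).
  rewrite -ln_prod; last by move=> v _; exact: BG_size_gt0.
  apply: Rle_trans (ln_fact_lb _) (ln_le _ _); first exact/INR_gt0/fact_gt0.
  exact/le_INR/leP/heavy_factorial_bound.
have expand : (x - y) * ln x = x * ln x - y * ln x by ring.
lra.
Qed.

Lemma classes_total_ge0 : (0 < #|U|)%N ->
  0 <= \big[Rplus/0]_(i < k)
    (negplogp (class_size i) #|U| - INR (class_size i) * (log2 (INR #|U|) / INR #|U|)
     - ylogyx (heavy_size i) (class_size i) / INR #|U|
     + INR (heavy_size i) * (log2 (exp 1) / INR #|U|)
     + (\big[Rplus/0]_(v | OPT v == i) ln (INR #|P (BG v)|)) / (INR #|U| * ln 2)).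
Proof.
move=> U_gt0; apply: sumR_ge0 => i _.
apply: class_term_nonneg => //; last exact: class_log_bound.
by rewrite -class_card_split leq_addl.
Qed.

End BiasedGreedy.

Local Open Scope R_scope.

Theorem mainTheorem4 (U : finType) (k : nat) (P : 'I_k -> {set U})
  (delta : R) (L : {set U}) (BG OPT : U -> 'I_k) :
  0 <= delta <= 1 ->
  (0 < #|U|)%N ->
  (forall u : U, exists i : 'I_k, u \in P i) ->
  is_BiasedGreedy_output P delta L BG ->
  is_cover P OPT ->
  let n := #|U| in
  let a := fun v : U => #|P (BG v)| in
  let x := fun i : 'I_k => #|[set v | OPT v == i]| in
  let y := fun i : 'I_k => #|[set v | (OPT v == i) && (v \notin L)]| in
  (forall (i : 'I_k) (v : U), OPT v = i -> v \in L -> (x i <= a v)%N) /\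
  (forall i : 'I_k,
     ((y i)`! <= \prod_(v | (OPT v == i) && (v \notin L)) a v)%N) /\
  (- (1 / INR n) * \big[Rplus/0]_(v : U) log2 (INR (a v))
     <= Ent OPT - log2 (INR n)
        - (1 / INR n) * \big[Rplus/0]_(i < k) ylogyx (y i) (x i)
        + ((INR n - INR (nceil (delta * INR n))) / INR n) * log2 (exp 1)).
Proof.
move=> _ U_gt0 _ [card_L [_ [phase1 [s [s_uniq [s_heavy phase2]]]]]] OPT_cover n a x y.
rewrite {}/n {}/a {}/x {}/y.
split; first exact: light_bound OPT_cover phase1.
split; first by move=> i; exact: (heavy_factorial_bound OPT_cover s_uniq s_heavy phase2 i).
have heavy_sum : INR (\sum_(i < k) #|[set v | (OPT v == i) && (v \notin L)]|)%N
    = INR #|U| - INR (nceil (delta * INR #|U|)).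
  by rewrite -card_L -(heavy_sizes_total L OPT) plus_INR; ring.
have log2_sum : \big[Rplus/0]_(v : U) log2 (INR #|P (BG v)|)
    = (\big[Rplus/0]_(i < k) \big[Rplus/0]_(v | OPT v == i) ln (INR #|P (BG v)|)) / ln 2.
  rewrite (partition_big OPT predT) //= /Rdiv -sumR_scaler.
  by apply: eq_bigr => i _; rewrite -sumR_scaler.
have := classes_total_ge0 OPT_cover phase1 s_uniq s_heavy phase2 U_gt0.
rewrite sumR_class_terms class_sizes_total heavy_sum log2_sum.
by apply: estimate_of_total; [exact: INR_gt0 | exact: ln2_gt0].
Qed.
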